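(* Let $\gamma$ be a norm on $\mathbb{R}^d$, let $D\subset\mathbb{R}^d$ be finite with positive weights $w_d$, and $w_D=\sum_{d\in D}w_d$. Then for every $m\in\mathrm{EH}_\gamma(D)$ there exist $c\in\mathbb{R}^d$ and $w_c\in(0,w_D)$ such that $m$ is a Fermat–Weber point of the weighted set $(D,w)+(c,w_c)$.
   Context: A norm is a symmetric gauge: the Minkowski functional $\gamma$ of a convex compact set $B_\gamma$, symmetric about and containing the origin in its interior. $\gamma^\circ$ is the dual norm, $B_{\gamma^\circ}$ its unit ball. A Fermat–Weber point of a finite positively weighted set $(S,u)$ is a minimizer of $x\mapsto\sum_{s\in S}u_s\gamma(x-s)$. For weighted sets, $(D,w)+(C,v)$ denotes the weighted set $D\cup C$ with weight $w_x+v_x$ at $x$ (where $w_x=0$ for $x\notin D$ and $v_x=0$ for $x\notin C$). For $p\in B_{\gamma^\circ}$: if $\gamma^\circ(p)=1$, $N(p)$ is the cone $\mathbb{R}_{\ge0}F(p)$ generated by the exposed face $F(p)=\{x\in B_\gamma:\langle p,x\rangle=1\}$; if $\gamma^\circ(p)<1$, $N(p)=\{0\}$. For finite $S$ and $\pi=(p_s)_{s\in S}\subset B_{\gamma^\circ}$, $C_\pi=\bigcap_{s\in S}(s+N(p_s))$; a nonempty $C_\pi$ is an elementary convex set for $S$. The elementary hull $\mathrm{EH}_\gamma(S)$ is the union of all bounded elementary convex sets for $S$. *)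

From HB Require Import structures.
From mathcomp Require Import all_boot all_order all_algebra.
From mathcomp Require Import classical_sets reals.
Set Implicit Arguments. Unset Strict Implicit. Unset Printing Implicit Defensive.
Import Order.TTheory GRing.Theory Num.Theory.
Local Open Scope ring_scope.
Local Open Scope classical_set_scope.

Section Defs.
Variables (R : realType) (d : nat).
Notation V := 'rV[R]_d.

Definition ip (p x : V) : R := \sum_(i < d) p ord0 i * x ord0 i.

Definition is_norm (gamma : V -> R) : Prop :=
  [/\ forall x, gamma x = 0 -> x = 0,
      forall (a : R) x, gamma (a *: x) = `|a| * gamma x
    & forall x y, gamma (x + y) <= gamma x + gamma y].

Definition unit_ball (gamma : V -> R) : set V := [set x | gamma x <= 1].

Definition dual_norm (gamma : V -> R) (p : V) : R :=
  sup [set ip p x | x in unit_ball gamma].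

Definition exposed_face (gamma : V -> R) (p : V) : set V :=
  [set x | unit_ball gamma x /\ ip p x = 1].

Definition Ncone (gamma : V -> R) (p : V) : set V :=
  if dual_norm gamma p == 1 then
    [set y | exists t : R, exists2 x, exposed_face gamma p x & 0 <= t /\ y = t *: x]
  else [set 0].

(* C_pi = \bigcap_{s in S} (s + N(p_s)), with pi : V -> V giving p_s *)
Definition Cpi (gamma : V -> R) (S : seq V) (pi : V -> V) : set V :=
  [set y | forall s, s \in S -> Ncone gamma (pi s) (y - s)].

Definition admissible (gamma : V -> R) (S : seq V) (pi : V -> V) : Prop :=
  forall s, s \in S -> dual_norm gamma (pi s) <= 1.

Definition bounded_set (A : set V) : Prop :=
  exists M : R, forall x, A x -> forall i, `|x ord0 i| <= M.

(* elementary hull: union of all bounded (nonempty) elementary convex sets *)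
Definition elem_hull (gamma : V -> R) (S : seq V) : set V :=
  [set m | exists pi : V -> V,
     [/\ admissible gamma S pi, Cpi gamma S pi !=set0,
         bounded_set (Cpi gamma S pi) & Cpi gamma S pi m]].

(* Fermat-Weber point of the weighted set (S,u), S duplicate-free *)
Definition FW_point (gamma : V -> R) (S : seq V) (u : V -> R) (m : V) : Prop :=
  forall x, \sum_(s <- S) u s * gamma (m - s) <= \sum_(s <- S) u s * gamma (x - s).

(* the weighted set (D,w) + (C,v): support D u C, weight w_x + v_x *)
Definition wsum_pts (D C : seq V) : seq V := undup (D ++ C).
Definition wsum_wt (D : seq V) (w : V -> R) (C : seq V) (v : V -> R) : V -> R :=
  fun x => (if x \in D then w x else 0) + (if x \in C then v x else 0).

End Defs.

From Pilot Require Import Defs.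
From HB Require Import structures.
From mathcomp Require Import all_boot all_order all_algebra.
From mathcomp Require Import classical_sets reals.
From mathcomp Require Import boolp topology normedtype matrix_normedtype derive.
From mathcomp Require Import ring lra.
Import Order.TTheory GRing.Theory Num.Theory.
Import numFieldTopology.Exports numFieldNormedType.Exports.
Set Implicit Arguments. Unset Strict Implicit.
Local Open Scope ring_scope.
Local Open Scope classical_set_scope.

(* Let m lie in a bounded elementary convex set C_pi, pi =
   (p_s) with gamma°(p_s) <= 1.  Since m - s lies in N(p_s), the supporting
   equality <p_s, m - s> = gamma(m - s) holds, so q = sum_s w_s p_s is a
   subgradient of the weighted distance sum f at m:
     f(m) + <q, x - m> <= f(x).
   Let k = gamma°(-q).  Then k < w_D: if not, a maximiser z of <-q, .> on the
   unit ball satisfies <p_s, -z> = 1 for all s, hence m - u z stays in C_pi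
   for every u >= 0, contradicting boundedness.  Adding the site c = m with
   weight w_c in (k, w_D) then makes m a minimiser, because
   -<q, x - m> <= k gamma(x - m) <= w_c gamma(x - m). *)

Lemma lipschitz_at_continuous (R : realType) (V : normedModType R)
    (f : V -> R) (K : R) (x : V) :
  0 <= K -> (forall y, `|f x - f y| <= K * `|x - y|) -> {for x, continuous f}.
Proof.
move=> K0 hf; apply/(@cvgrPdist_lt R R^o V (nbhs x) (nbhs_filter x) f (f x)).
move=> e e0; apply/(@nbhs_normP R V).
have K1 : 0 < K + 1 by lra.
exists (e / (K + 1)); first by rewrite /= divr_gt0.
move=> y /= hy; apply: le_lt_trans (hf y) _.
rewrite -(ltr_pM2r K1) divfK ?gt_eqF // in hy.
have := normr_ge0 (x - y); nra.
Qed.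

Lemma coord_le_norm (R : realType) (d : nat) (x : 'rV[R]_d) i :
  `|x ord0 i| <= `|x|.
Proof.
have /mapP[j Hj ->] : `|x ord0 i| \in [seq `|x k.1 k.2| | k : 'I_1 * 'I_d].
  by apply/mapP; exists (ord0, i) => //=; rewrite mem_enum.
by rewrite [leRHS]mx_normrE; apply/bigmax_geP; right => /=; exists j.
Qed.

Lemma norm_bounded_set (R : realType) (d : nat) (A : set 'rV[R]_d) (B : R) :
  (forall x, A x -> `|x| <= B) -> bounded_set A.
Proof.
move=> hB; rewrite /= /bounded_near; near=> M => x Ax.
apply: le_trans (hB _ Ax) _; near: M; apply: nbhs_pinfty_ge.
by rewrite num_real.
Unshelve. all: by end_near. Qed.

Lemma nonzero_row (R : realType) (d : nat) :
  (0 < d)%N -> exists x : 'rV[R]_d, x != 0.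
Proof.
move=> d0; exists (const_mx 1); apply/negP => /eqP/rowP/(_ (Ordinal d0)).
by rewrite !mxE => /eqP; rewrite oner_eq0.
Qed.

Lemma bounded_ray (R : realType) (d : nat) (A : set 'rV[R]_d) (m v : 'rV[R]_d) :
  Defs.bounded_set A -> (forall u, 0 <= u -> A (m + u *: v)) -> v = 0.
Proof.
move=> [M hM] hA; apply/rowP => i; rewrite mxE; apply/eqP; apply: contraT => vi0.
have vi : 0 < `|v ord0 i| by rewrite normr_gt0.
pose u := (`|M| + `|m ord0 i| + 1) / `|v ord0 i|.
have u0 : 0 <= u by rewrite divr_ge0 // addr_ge0 // addr_ge0.
have hu : `|u * v ord0 i| = `|M| + `|m ord0 i| + 1.
  by rewrite normrM (ger0_norm u0) divfK ?gt_eqF.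
have := hM _ (hA u u0) i; rewrite !mxE => hMu.
have := ler_normD (m ord0 i + u * v ord0 i) (- m ord0 i).
rewrite normrN addrC addKr hu; have := ler_norm M; lra.
Qed.

Lemma weighted_mean_eq1 (R : numDomainType) (I : eqType) (r : seq I) (w a : I -> R) :
  (forall i, i \in r -> 0 < w i) -> (forall i, i \in r -> a i <= 1) ->
  \sum_(i <- r) w i <= \sum_(i <- r) w i * a i -> forall i, i \in r -> a i = 1.
Proof.
move=> hw ha hle.
have F0 i : i \in r -> 0 <= w i * (1 - a i).
  by move=> hi; apply: mulr_ge0; [exact: ltW (hw _ hi) | rewrite subr_ge0 ha].
have hsum : \sum_(i <- r | i \in r) w i * (1 - a i) == 0.
  rewrite eq_le sumr_ge0 // andbT -big_seq.
  under eq_bigr do rewrite mulrBr mulr1.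
  by rewrite sumrB subr_le0.
move=> i hi; move: hsum; rewrite psumr_eq0 // => /allP/(_ i hi).
by rewrite hi /= mulf_eq0 gt_eqF ?hw //= subr_eq0 => /eqP.
Qed.

Section Gauge.
Variables (R : realType) (d : nat) (gamma : 'rV[R]_d -> R).
Hypothesis hg : is_norm gamma.

Lemma gauge0 : gamma 0 = 0.
Proof. by case: hg => _ hZ _; rewrite -(scale0r 0) hZ normr0 mul0r. Qed.

Lemma gaugeZ a x : gamma (a *: x) = `|a| * gamma x.
Proof. by case: hg. Qed.

Lemma gaugeN x : gamma (- x) = gamma x.
Proof. by rewrite -scaleN1r gaugeZ normrN normr1 mul1r. Qed.

Lemma gaugeD x y : gamma (x + y) <= gamma x + gamma y.
Proof. by case: hg. Qed.

Lemma gauge_ge0 x : 0 <= gamma x.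
Proof. by have := gaugeD x (- x); rewrite subrr gauge0 gaugeN; lra. Qed.

Lemma gauge_gt0 x : x != 0 -> 0 < gamma x.
Proof.
case: hg => h0 _ _ x0; rewrite lt_neqAle gauge_ge0 andbT eq_sym.
by apply: contraNneq x0 => /h0 ->.
Qed.

Lemma gauge_dist x y : `|gamma x - gamma y| <= gamma (x - y).
Proof.
have hx := gaugeD (x - y) y; have hy := gaugeD (y - x) x.
rewrite subrK in hx; rewrite subrK -opprB gaugeN in hy.
by rewrite ler_norml; apply/andP; split; lra.
Qed.

Lemma gauge_sum (I : Type) (r : seq I) (F : I -> 'rV[R]_d) :
  gamma (\sum_(i <- r) F i) <= \sum_(i <- r) gamma (F i).
Proof.
elim: r => [|a r IH]; first by rewrite !big_nil gauge0.
by rewrite !big_cons; apply: le_trans (gaugeD _ _) _; exact: lerD.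
Qed.

Lemma gauge_le_norm : exists2 K, 0 <= K & forall x, gamma x <= K * `|x|.
Proof.
exists (\sum_(i < d) gamma (delta_mx ord0 i)).
  by apply: sumr_ge0 => i _; exact: gauge_ge0.
move=> x; rewrite {1}(matrix_sum_delta x) big_ord1.
apply: le_trans (gauge_sum _ _) _; rewrite mulr_suml; apply: ler_sum => i _.
by rewrite gaugeZ mulrC ler_wpM2l ?gauge_ge0 ?coord_le_norm.
Qed.

Lemma gauge_continuous x : {for x, continuous gamma}.
Proof.
have [K K0 hK] := gauge_le_norm.
apply: (lipschitz_at_continuous K0) => y.
exact: le_trans (gauge_dist _ _) (hK _).
Qed.

Hypothesis d0 : (0 < d)%N.

(* Conversely gamma dominates a multiple of the sup-norm: minimise gamma on
   the compact unit sphere of the sup-norm. *)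
Lemma norm_le_gauge : exists2 c, 0 < c & forall x, c * `|x| <= gamma x.
Proof.
pose S := [set x : 'rV[R]_d | `|x| = 1].
have S0 : S !=set0.
  have [x x0] := nonzero_row R d0; exists (`|x|^-1 *: x).
  by rewrite /S /= normrZ ger0_norm ?invr_ge0 // mulVf // normr_eq0.
have Sc : compact S.
  apply: bounded_closed_compact; first by apply: (@norm_bounded_set _ _ _ 1) => x ->.
  apply: (@preimage_closed _ _ (Num.norm : 'rV[R]_d -> R) [set r | r = 1]).
    by move=> x _; exact: norm_continuous.
  exact: closed_eq.
have [c /set_mem Sc' hmin] :=
  compact_EVT_min S0 Sc (continuous_subspaceT gauge_continuous).
have c0 : c != 0.
  by apply/eqP => c0; move: Sc'; rewrite /S /= c0 normr0 => /eqP; rewrite eq_sym oner_eq0.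
exists (gamma c); first exact: gauge_gt0.
move=> x; have [->|x0] := eqVneq x 0; first by rewrite normr0 mulr0 gauge_ge0.
have nx : 0 < `|x| by rewrite normr_gt0.
have hS : (`|x|^-1 *: x) \in S.
  by rewrite inE /S /= normrZ ger0_norm ?invr_ge0 // mulVf ?gt_eqF.
have := hmin _ hS; rewrite gaugeZ ger0_norm ?invr_ge0 //.
by rewrite ler_pdivlMl // mulrC.
Qed.

Lemma unit_ball_norm_bounded : exists B, forall x, gamma x <= 1 -> `|x| <= B.
Proof.
have [c c0 hc] := norm_le_gauge; exists c^-1 => x hx.
by rewrite -(ler_pM2l c0) mulfV ?gt_eqF //; exact: le_trans (hc x) hx.
Qed.

Lemma unit_ball_compact : compact (unit_ball gamma).
Proof.
apply: bounded_closed_compact.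
  by have [B hB] := unit_ball_norm_bounded; exact: (@norm_bounded_set _ _ _ B).
apply: (@preimage_closed _ _ gamma [set r | r <= 1]).
  by move=> x _; exact: gauge_continuous.
exact: closed_le.
Qed.

End Gauge.

Section InnerProduct.
Variables (R : realType) (d : nat).
Implicit Types (p x y : 'rV[R]_d).

Lemma ipD p x y : ip p (x + y) = ip p x + ip p y.
Proof. by rewrite /ip -big_split; apply: eq_bigr => i _; rewrite mxE mulrDr. Qed.

Lemma ipZ p a x : ip p (a *: x) = a * ip p x.
Proof. by rewrite /ip mulr_sumr; apply: eq_bigr => i _; rewrite mxE mulrCA. Qed.

Lemma ip0 p : ip p 0 = 0.
Proof. by rewrite -(scale0r 0) ipZ mul0r. Qed.

Lemma ipN p x : ip p (- x) = - ip p x.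
Proof. by rewrite -scaleN1r ipZ mulN1r. Qed.

Lemma ipB p x y : ip p (x - y) = ip p x - ip p y.
Proof. by rewrite ipD ipN. Qed.

Lemma ipNl p x : ip (- p) x = - ip p x.
Proof. by rewrite /ip -sumrN; apply: eq_bigr => i _; rewrite mxE mulNr. Qed.

Lemma ip_suml (I : Type) (r : seq I) (c : I -> R) (P : I -> 'rV[R]_d) x :
  ip (\sum_(i <- r) c i *: P i) x = \sum_(i <- r) c i * ip (P i) x.
Proof.
elim: r => [|a r IH].
  by rewrite !big_nil /ip; apply: big1 => i _; rewrite mxE mul0r.
rewrite !big_cons -IH /ip mulr_sumr -big_split; apply: eq_bigr => i _.
by rewrite !mxE mulrDl mulrA.
Qed.

Lemma ip_le_norm p : exists2 K, 0 <= K & forall x, `|ip p x| <= K * `|x|.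
Proof.
exists (\sum_(i < d) `|p ord0 i|); first exact: sumr_ge0.
move=> x; rewrite mulr_suml; apply: le_trans (ler_norm_sum _ _ _) _.
by apply: ler_sum => i _; rewrite normrM ler_wpM2l ?coord_le_norm.
Qed.

Lemma ip_continuous p x : {for x, continuous (ip p)}.
Proof.
have [K K0 hK] := ip_le_norm p.
by apply: (lipschitz_at_continuous K0) => y; rewrite -ipB hK.
Qed.

End InnerProduct.

Section DualNorm.
Variables (R : realType) (d : nat) (gamma : 'rV[R]_d -> R).
Hypotheses (hg : is_norm gamma) (d0 : (0 < d)%N).
Implicit Types (p x y : 'rV[R]_d).

Lemma dual_has_sup p : has_sup [set ip p x | x in unit_ball gamma].
Proof.
have [B hB] := unit_ball_norm_bounded hg d0; have [K K0 hK] := ip_le_norm p.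
split; first by exists (ip p 0), 0; rewrite // /unit_ball /= (gauge0 hg).
exists (K * B) => _ [x hx <-]; apply: le_trans (ler_norm _) _.
by apply: le_trans (hK x) _; rewrite ler_wpM2l ?hB.
Qed.

Lemma dual_ub p x : gamma x <= 1 -> ip p x <= dual_norm gamma p.
Proof. by move=> hx; apply: sup_upper_bound; [exact: dual_has_sup | exists x]. Qed.

Lemma dual_norm_ge0 p : 0 <= dual_norm gamma p.
Proof. by rewrite -(ip0 p) dual_ub // (gauge0 hg). Qed.

Lemma ip_le_dual p y : ip p y <= dual_norm gamma p * gamma y.
Proof.
have [->|y0] := eqVneq y 0; first by rewrite ip0 (gauge0 hg) mulr0.
have gy := gauge_gt0 hg y0.
have hy : gamma ((gamma y)^-1 *: y) <= 1.
  by rewrite (gaugeZ hg) ger0_norm ?invr_ge0 ?(ltW gy) // mulVf ?gt_eqF.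
by have := dual_ub p hy; rewrite ipZ ler_pdivrMl // mulrC.
Qed.

Lemma ip_le_gauge p y : dual_norm gamma p <= 1 -> ip p y <= gamma y.
Proof.
move=> hp; apply: le_trans (ip_le_dual p y) _.
by rewrite ler_piMl ?(gauge_ge0 hg).
Qed.

Lemma dual_norm_attained p :
  exists2 y, gamma y <= 1 & ip p y = dual_norm gamma p.
Proof.
have B0 : unit_ball gamma !=set0 by exists 0; rewrite /unit_ball /= (gauge0 hg).
have [y /set_mem hy hmax] := compact_EVT_max B0 (unit_ball_compact hg d0)
  (continuous_subspaceT (@ip_continuous _ _ p)).
exists y => //; apply: le_anti; rewrite dual_ub //=.
apply: ge_sup; first by exists (ip p y), y.
by move=> _ [x hx <-]; apply: hmax; rewrite inE.
Qed.

End DualNorm.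

Section Cones.
Variables (R : realType) (d : nat) (gamma : 'rV[R]_d -> R).
Hypotheses (hg : is_norm gamma) (d0 : (0 < d)%N).
Implicit Types (p y z : 'rV[R]_d).

Definition face_cone p : set 'rV[R]_d :=
  [set y | exists t : R, exists2 x, exposed_face gamma p x & 0 <= t /\ y = t *: x].

Lemma NconeE p : dual_norm gamma p = 1 -> Ncone gamma p = face_cone p.
Proof. by rewrite /Ncone => ->; rewrite eqxx. Qed.

Lemma Ncone_support p y :
  dual_norm gamma p <= 1 -> Ncone gamma p y -> ip p y = gamma y.
Proof.
move=> hp; rewrite /Ncone; case: eqP => [_|_ ->]; last by rewrite ip0 (gauge0 hg).
move=> [t [x [hx1 hpx] [t0 ->]]]; rewrite ipZ hpx (gaugeZ hg) ger0_norm //.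
suff -> : gamma x = 1 by [].
by apply: le_anti; rewrite hx1 -{1}hpx ip_le_gauge.
Qed.

(* The exposed face is convex, hence its cone is closed under addition. *)
Lemma face_coneD p y z : face_cone p y -> face_cone p z -> face_cone p (y + z).
Proof.
move=> [t [x [hx1 hpx] [t0 ->]]] [u [v [hv1 hpv] [u0 ->]]].
have [tu0|tu0] := eqVneq (t + u) 0.
  have [-> ->] : t = 0 /\ u = 0 by split; lra.
  by exists 0, x; rewrite ?scale0r ?addr0.
have tu : 0 < t + u by rewrite lt_neqAle eq_sym tu0 addr_ge0.
exists (t + u), ((t + u)^-1 *: (t *: x + u *: v)); last first.
  by split; [exact: ltW | rewrite scalerA mulfV ?scale1r ?gt_eqF].
split; last by rewrite ipZ ipD !ipZ hpx hpv !mulr1 mulVf ?gt_eqF.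
rewrite /unit_ball /= (gaugeZ hg) ger0_norm ?invr_ge0 ?(ltW tu) // ler_pdivrMl // mulr1.
apply: le_trans (gaugeD hg _ _) _; rewrite !(gaugeZ hg) !ger0_norm //.
move: hx1 hv1; rewrite /unit_ball /=; nra.
Qed.

End Cones.

Section ElementaryCells.
Variables (R : realType) (d : nat) (gamma : 'rV[R]_d -> R).
Hypotheses (hg : is_norm gamma) (d0 : (0 < d)%N).

Variables (D : seq 'rV[R]_d) (pi : 'rV[R]_d -> 'rV[R]_d) (m : 'rV[R]_d).
Hypotheses (adm : admissible gamma D pi) (Cm : Cpi gamma D pi m).
Hypothesis bnd : Defs.bounded_set (Cpi gamma D pi).

Lemma cell_support s : s \in D -> ip (pi s) (m - s) = gamma (m - s).
Proof. by move=> hs; apply: (Ncone_support hg d0); [exact: adm | exact: Cm]. Qed.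

Lemma cell_subgradient (w : 'rV[R]_d -> R) x :
  (forall s, s \in D -> 0 <= w s) ->
  \sum_(s <- D) w s * gamma (m - s) + ip (\sum_(s <- D) w s *: pi s) (x - m)
  <= \sum_(s <- D) w s * gamma (x - s).
Proof.
move=> hw; rewrite ip_suml -big_split /= big_seq [leRHS]big_seq.
apply: ler_sum => s hs; rewrite -mulrDr ler_wpM2l ?hw //.
by rewrite -cell_support // -ipD addrC subrKA (ip_le_gauge hg d0) ?adm.
Qed.

Lemma cell_ray z : gamma z <= 1 -> (forall s, s \in D -> ip (pi s) z = 1) ->
  forall u, 0 <= u -> Cpi gamma D pi (m + u *: z).
Proof.
move=> gz hz u u0 s hs.
have p1 : dual_norm gamma (pi s) = 1.
  by apply: le_anti; rewrite adm //= -(hz s hs) (dual_ub hg d0).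
rewrite NconeE // addrAC; apply: (face_coneD hg).
  by rewrite -NconeE //; exact: Cm.
by exists u, z; [split; [exact: gz | exact: hz] | split].
Qed.

Lemma cell_sites_nonempty : exists s0, s0 \in D.
Proof.
case: D adm Cm bnd => [|s0 D'] _ _ hb; last by exists s0; rewrite mem_head.
have [v v0] := nonzero_row R d0.
have ray_v u : 0 <= u -> Cpi gamma [::] pi (m + u *: v) by move=> _ s; rewrite in_nil.
by move: v0; rewrite (bounded_ray hb ray_v) eqxx.
Qed.

Lemma cell_dual_lt (w : 'rV[R]_d -> R) : (forall s, s \in D -> 0 < w s) ->
  dual_norm gamma (- \sum_(s <- D) w s *: pi s) < \sum_(s <- D) w s.
Proof.
move=> hw; have [s0 hs0] := cell_sites_nonempty.
have [y hy <-] := dual_norm_attained hg d0 (- \sum_(s <- D) w s *: pi s).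
rewrite ltNge; apply/negP; rewrite ipNl -ipN ip_suml => hle.
have gz : gamma (- y) <= 1 by rewrite (gaugeN hg).
have z1 := weighted_mean_eq1 hw
  (fun s hs => le_trans (ip_le_gauge hg d0 _ (adm hs)) gz) hle.
have := z1 s0 hs0; rewrite (bounded_ray bnd (cell_ray gz z1)) ip0.
by move/eqP; rewrite eq_sym oner_eq0.
Qed.

End ElementaryCells.

Lemma wsum_single_point (R : realType) (d : nat) (D : seq 'rV[R]_d)
    (w : 'rV[R]_d -> R) (c : 'rV[R]_d) (v : R) (g : 'rV[R]_d -> R) : uniq D ->
  \sum_(s <- wsum_pts D [:: c]) wsum_wt D w [:: c] (fun _ => v) s * g s
  = \sum_(s <- D) w s * g s + v * g c.
Proof.
move=> hD; rewrite /wsum_pts undup_cat /= big_cat /= big_cons big_nil addr0.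
rewrite big_filter (undup_id hD) {2}/wsum_wt mem_seq1 eqxx.
have -> : \sum_(s <- D | s \notin [:: c]) wsum_wt D w [:: c] (fun=> v) s * g s
        = \sum_(s <- D | s != c) w s * g s.
  rewrite big_seq_cond [RHS]big_seq_cond; apply: eq_big => [s|s].
    by rewrite mem_seq1.
  by rewrite mem_seq1 /wsum_wt mem_seq1 => /andP[-> /negbTE ->]; rewrite addr0.
have [hc|hc] := boolP (c \in D); first by rewrite (bigD1_seq c hc hD) /= mulrDl; lra.
rewrite add0r; congr (_ + _); rewrite big_seq_cond [RHS]big_seq.
by apply: eq_bigl => s; apply/andb_idr => hs; apply: contraNneq hc => <-.
Qed.

Unset Implicit Arguments.

Theorem mainTheorem11 (R : realType) (d : nat) (gamma : 'rV[R]_d -> R)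
  (D : seq 'rV[R]_d) (w : 'rV[R]_d -> R) :
  (0 < d)%N -> is_norm gamma -> uniq D -> (forall s, s \in D -> 0 < w s) ->
  forall m, elem_hull gamma D m ->
  exists (c : 'rV[R]_d) (wc : R),
    [/\ 0 < wc, wc < \sum_(s <- D) w s &
        FW_point gamma (wsum_pts D [:: c])
                 (wsum_wt D w [:: c] (fun _ => wc)) m].
Proof.
move=> d0 hg hD hw m [pi [adm _ bnd Cm]].
pose q := \sum_(s <- D) w s *: pi s.
have klt : dual_norm gamma (- q) < \sum_(s <- D) w s := cell_dual_lt hg d0 adm Cm bnd hw.
have k0 := dual_norm_ge0 hg d0 (- q).
set k := dual_norm gamma (- q) in klt k0; set wD := \sum_(s <- D) w s in klt *.
exists m, ((k + wD) / 2); split; [lra | lra | move=> x].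
rewrite !wsum_single_point // subrr (gauge0 hg) mulr0 addr0.
have hsub := cell_subgradient hg d0 adm Cm x (fun s hs => ltW (hw s hs)).
have hq : - ip q (x - m) <= k * gamma (x - m) by rewrite -ipNl ip_le_dual.
have hk : k * gamma (x - m) <= (k + wD) / 2 * gamma (x - m).
  by rewrite ler_wpM2r ?(gauge_ge0 hg) //; lra.
rewrite -/q in hsub; lra.
Qed.
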